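(* Let $\lambda,\xi\in\mathbb{C}$ with $\operatorname{Re}\lambda<0$ and $\operatorname{Re}\xi\ge1$, and let $f(z)=e^{-z+\lambda}+\xi$. Then the imaginary axis $\{z:\operatorname{Re}z=0\}$ does not intersect $I(f)$.
   Context: For an entire function $f$, $f^n$ denotes the $n$-th iterate and $I(f)=\{z\in\mathbb{C}: f^n(z)\to\infty\}$ is its escaping set. *)

From Stdlib Require Import Reals.
Open Scope R_scope.

Record Cplx := mkC { Re : R; Im : R }.

Definition Cadd (z w : Cplx) : Cplx := mkC (Re z + Re w) (Im z + Im w).
Definition Copp (z : Cplx) : Cplx := mkC (- Re z) (- Im z).
Definition Cabs (z : Cplx) : R := sqrt (Re z ^ 2 + Im z ^ 2).
Definition Cexp (z : Cplx) : Cplx :=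
  mkC (exp (Re z) * cos (Im z)) (exp (Re z) * sin (Im z)).

Definition iterate (f : Cplx -> Cplx) (n : nat) (z : Cplx) : Cplx := Nat.iter n f z.

Definition escaping (f : Cplx -> Cplx) (z : Cplx) : Prop :=
  forall M : R, exists N : nat, forall n : nat, (N <= n)%nat -> M < Cabs (iterate f n z).

Definition fam (lam xi : Cplx) (z : Cplx) : Cplx := Cadd (Cexp (Cadd (Copp z) lam)) xi.

(* For Re w >= Re lam the exponent -w + lam has non-positive real part, so
   |e^(-w+lam)| <= 1.  Hence f sends the closed right half-plane into the
   half-plane Re >= Re xi - 1 >= 0, i.e. into itself, and into the disc of
   radius 1 + |xi|.  Every orbit starting on the imaginary axis therefore stays
   bounded and cannot escape. *)
From Stdlib Require Import Reals Lra.
Open Scope R_scope.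

Lemma Cabs_le_Rabs_Re_Im (z : Cplx) : Cabs z <= Rabs (Re z) + Rabs (Im z).
Proof.
  pose proof (Rabs_pos (Re z)); pose proof (Rabs_pos (Im z)).
  unfold Cabs; rewrite <- (sqrt_pow2 (Rabs (Re z) + Rabs (Im z))) by lra.
  apply sqrt_le_1_alt.
  rewrite <- (pow2_abs (Re z)), <- (pow2_abs (Im z)); nra.
Qed.

Lemma Rabs_Re_Cexp (w : Cplx) : Rabs (Re (Cexp w)) <= exp (Re w).
Proof.
  simpl; pose proof (exp_pos (Re w)); pose proof (COS_bound (Im w)).
  rewrite Rabs_mult, (Rabs_right (exp (Re w))) by lra.
  assert (Rabs (cos (Im w)) <= 1) by (apply Rabs_le; lra).
  pose proof (Rabs_pos (cos (Im w))); nra.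
Qed.

Lemma Rabs_Im_Cexp (w : Cplx) : Rabs (Im (Cexp w)) <= exp (Re w).
Proof.
  simpl; pose proof (exp_pos (Re w)); pose proof (SIN_bound (Im w)).
  rewrite Rabs_mult, (Rabs_right (exp (Re w))) by lra.
  assert (Rabs (sin (Im w)) <= 1) by (apply Rabs_le; lra).
  pose proof (Rabs_pos (sin (Im w))); nra.
Qed.

Lemma bounded_orbit_not_escaping (f : Cplx -> Cplx) (z : Cplx) (B : R) :
  (forall n, Cabs (iterate f n z) <= B) -> ~ escaping f z.
Proof.
  intros hB hesc; destruct (hesc B) as [N HN].
  specialize (HN N (le_n N)); specialize (hB N); lra.
Qed.

Lemma iterate_bounded (f : Cplx -> Cplx) (P : Cplx -> Prop) (B : R) (z : Cplx) :
  (forall w, P w -> P (f w) /\ Cabs (f w) <= B) -> P z ->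
  forall n, P (iterate f n z) /\ Cabs (iterate f n z) <= Rmax (Cabs z) B.
Proof.
  intros hf hz; induction n as [|n [IHP _]].
  - split; [exact hz | apply Rmax_l].
  - destruct (hf _ IHP) as [hP hB].
    split; [exact hP | eapply Rle_trans; [exact hB | apply Rmax_r]].
Qed.

Section Family.

Variables lam xi : Cplx.

Lemma exp_Re_exponent_le_1 (w : Cplx) :
  Re lam <= Re w -> exp (Re (Cadd (Copp w) lam)) <= 1.
Proof.
  intros hw; rewrite <- exp_0; simpl.
  destruct (Req_dec (- Re w + Re lam) 0) as [-> | hne]; [lra|].
  left; apply exp_increasing; lra.
Qed.

Lemma Re_fam_ge (w : Cplx) : Re lam <= Re w -> Re xi - 1 <= Re (fam lam xi w).
Proof.
  intros hw; pose proof (exp_Re_exponent_le_1 w hw).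
  pose proof (Rabs_Re_Cexp (Cadd (Copp w) lam)).
  pose proof (Rle_abs (- Re (Cexp (Cadd (Copp w) lam)))) as hopp.
  rewrite Rabs_Ropp in hopp.
  unfold fam; simpl in *; lra.
Qed.

Lemma Cabs_fam_le (w : Cplx) :
  Re lam <= Re w -> Cabs (fam lam xi w) <= 2 + Rabs (Re xi) + Rabs (Im xi).
Proof.
  intros hw; pose proof (exp_Re_exponent_le_1 w hw).
  pose proof (Rabs_Re_Cexp (Cadd (Copp w) lam)).
  pose proof (Rabs_Im_Cexp (Cadd (Copp w) lam)).
  eapply Rle_trans; [apply Cabs_le_Rabs_Re_Im|]; unfold fam; simpl in *.
  pose proof (Rabs_triang (exp (- Re w + Re lam) * cos (- Im w + Im lam)) (Re xi)).
  pose proof (Rabs_triang (exp (- Re w + Re lam) * sin (- Im w + Im lam)) (Im xi)).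
  lra.
Qed.

End Family.

Theorem lemma2 (lam xi : Cplx) (hlam : Re lam < 0) (hxi : 1 <= Re xi) :
  forall z : Cplx, Re z = 0 -> ~ escaping (fam lam xi) z.
Proof.
  intros z hz.
  set (B := 2 + Rabs (Re xi) + Rabs (Im xi)).
  assert (hhalf : forall w, 0 <= Re w ->
            0 <= Re (fam lam xi w) /\ Cabs (fam lam xi w) <= B).
  { intros w hw; assert (hlw : Re lam <= Re w) by lra.
    pose proof (Re_fam_ge lam xi w hlw).
    split; [lra | now apply Cabs_fam_le]. }
  apply (bounded_orbit_not_escaping _ _ (Rmax (Cabs z) B)); intros n.
  apply (iterate_bounded _ (fun w => 0 <= Re w)); [exact hhalf | cbn; lra].
Qed.
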